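(* Let $D\mathcal{M}$ be an $\ell c$DCB system, linearly conjugate via $Q=\mathrm{diag}(q_1,\dots,q_n)$ to the DCB system $D\tilde{\mathcal{M}}$, and let $\theta\in C([-\tau,0];\mathbb{R}^n_{>0})$. Then the set $\mathcal H_\theta$ contains exactly one positive equilibrium of $D\mathcal{M}$; namely $x^*=Q\tilde x^*$, where $\tilde x^*$ is the unique positive equilibrium of $D\tilde{\mathcal{M}}$ in its stoichiometric compatibility class containing $Q^{-1}\theta$.
   Context: For $x,y\in\mathbb{R}^n$ with $x\ge 0$, write $x^{y}=\prod_{j=1}^n x_j^{y_j}$. A delayed mass-action system on species $X_1,\dots,X_n$ consists of reactions $R_i: y_{\cdot i}\to y'_{\cdot i}$, $i=1,\dots,r$, with complexes $y_{\cdot i},y'_{\cdot i}\in\mathbb{R}^n_{\ge0}$, rate constants $\kappa_i>0$ and delays $\tau_i\ge0$; with $\tau\ge\max_i\tau_i$, its dynamics is the delay differential equation $\dot x(t)=F(x_t):=\sum_{i=1}^r\kappa_i\big[x(t-\tau_i)^{y_{\cdot i}}y'_{\cdot i}-x(t)^{y_{\cdot i}}y_{\cdot i}\big]$, $t\ge 0$, where $x_t(s)=x(t+s)$, $s\in[-\tau,0]$, with initial function $\theta\in C([-\tau,0];\mathbb{R}^n_{\ge0})$. Its stoichiometric subspace is $\mathscr S=\mathrm{span}\{y'_{\cdot i}-y_{\cdot i}\}$. A positive equilibrium is $x^*\in\mathbb{R}^n_{>0}$ with $\sum_i\kappa_i (x^* )^{y_{\cdot i}}(y'_{\cdot i}-y_{\cdot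 i})=0$ (viewed as a constant function). The stoichiometric compatibility class containing $\theta$ is $\mathcal P_\theta=\{\psi\in C([-\tau,0];\mathbb{R}^n_{\ge0}): c_a(\psi)=c_a(\theta)\ \forall a\in\mathscr S^\perp\}$, where $c_a(\psi)=a^\top\big[\psi(0)+\sum_{i=1}^r\big(\kappa_i\int_{-\tau_i}^0\psi(s)^{y_{\cdot i}}ds\big)y_{\cdot i}\big]$. A vector $\bar x\in\mathbb{R}^n_{>0}$ is a complex balanced equilibrium if for every complex $\eta$ of the network $\sum_{i: y_{\cdot i}=\eta}\kappa_i\bar x^{y_{\cdot i}}=\sum_{i: y'_{\cdot i}=\eta}\kappa_i\bar x^{y_{\cdot i}}$. A delayed complex balanced (DCB) system is a delayed mass-action system admitting a positive complex balanced equilibrium; each stoichiometric compatibility class $\mathcal P_\theta$ of a DCB system with $\theta$ positive contains exactly one positive equilibrium. Two delayed mass-action systems $D\mathcal{M}$ (right-hand side $F$) and $D\tilde{\mathcal{M}}$ (right-hand side $\tilde F$) on the same species are linearly conjugate via a positive diagonal matrix $Q$ if $F(Q\psi)=Q\tilde F(\psi)$ for all $\psi\in C([-\tau,0];\mathbb{R}^n_{>0})$. An $\ell c$DCB system is one linearly conjugate via some positive diagonal matrix to a DCB system. If $D\tilde{\mathcal{M}}$ has reactions $y_{\cdot i}\to\tilde y'_{\cdot i}$, rate constants $\tilde\kappa_i$, delays $\tau_i$ ($i=1,\dots,\tilde r$) and stoichiometric subspace $\tilde{\mathscr S}$, define $h_a(\psi)=a^\top\big[\psi(0)+\sum_{i=1}^{\tilde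 r}\big(\tilde\kappa_i\prod_{j=1}^n q_j^{-y_{ji}}\int_{-\tau_i}^0\psi(s)^{y_{\cdot i}}ds\big)Qy_{\cdot i}\big]$ and $\mathcal H_\theta=\{\psi\in C([-\tau,0];\mathbb{R}^n_{\ge0}): h_a(\psi)=h_a(\theta)\ \forall a\in(Q^{-1})^\top\tilde{\mathscr S}^\perp\}$. *)

From Stdlib Require Import Reals Lra ClassicalEpsilon.
From Coquelicot Require Import Coquelicot.
Open Scope R_scope.

(* Vectors in R^n are functions nat -> R, only indices j < n are meaningful. *)
Fixpoint fsum (n : nat) (f : nat -> R) : R :=
  match n with O => 0 | S k => fsum k f + f k end.
Fixpoint fprod (n : nat) (f : nat -> R) : R :=
  match n with O => 1 | S k => fprod k f * f k end.

Definition dot (n : nat) (a v : nat -> R) : R := fsum n (fun j => a j * v j).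
Definition veq (n : nat) (u v : nat -> R) : Prop := forall j, (j < n)%nat -> u j = v j.

(* real power x^a for x >= 0, with 0^0 = 1 and 0^a = 0 for a <> 0 *)
Definition rpow (x a : R) : R :=
  if Req_EM_T x 0 then (if Req_EM_T a 0 then 1 else 0) else Rpower x a.

Definition mono (n : nat) (x y : nat -> R) : R := fprod n (fun j => rpow (x j) (y j)).

(* A delayed mass-action system: reactions i < nr,
   ysrc i = y_{.i} (reactant complex), yprod i = y'_{.i} (product complex),
   rate constants kap i, delays dly i. *)
Record dmas := DMAS {
  nr : nat;
  ysrc : nat -> nat -> R;
  yprod : nat -> nat -> R;
  kap : nat -> R;
  dly : nat -> R }.

Definition wf_dmas (n : nat) (M : dmas) : Prop :=
  forall i, (i < nr M)%nat ->
    0 < kap M i /\ 0 <= dly M i /\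
    (forall j, (j < n)%nat -> 0 <= ysrc M i j /\ 0 <= yprod M i j).

Definition delay_bound (M : dmas) (tau : R) : Prop :=
  forall i, (i < nr M)%nat -> dly M i <= tau.

(* Initial functions: psi : R -> R^n, considered on [-tau, 0] *)
Definition in_I (tau s : R) : Prop := - tau <= s <= 0.

Definition cont_on (n : nat) (tau : R) (psi : R -> nat -> R) : Prop :=
  forall j, (j < n)%nat -> forall s, in_I tau s -> forall eps, 0 < eps ->
    exists delta, 0 < delta /\ forall s', in_I tau s' -> Rabs (s' - s) < delta ->
      Rabs (psi s' j - psi s j) < eps.

Definition Cnn (n : nat) (tau : R) (psi : R -> nat -> R) : Prop :=
  cont_on n tau psi /\ forall s, in_I tau s -> forall j, (j < n)%nat -> 0 <= psi s j.
Definition Cpos (n : nat) (tau : R) (psi : R -> nat -> R) : Prop :=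
  cont_on n tau psi /\ forall s, in_I tau s -> forall j, (j < n)%nat -> 0 < psi s j.

Definition Frhs (n : nat) (M : dmas) (psi : R -> nat -> R) : nat -> R :=
  fun j => fsum (nr M) (fun i => kap M i *
     (mono n (psi (- dly M i)) (ysrc M i) * yprod M i j
      - mono n (psi 0) (ysrc M i) * ysrc M i j)).

Definition in_S (n : nat) (M : dmas) (v : nat -> R) : Prop :=
  exists c : nat -> R, forall j, (j < n)%nat ->
    v j = fsum (nr M) (fun i => c i * (yprod M i j - ysrc M i j)).
Definition in_Sperp (n : nat) (M : dmas) (a : nat -> R) : Prop :=
  forall v, in_S n M v -> dot n a v = 0.

Definition constf (x : nat -> R) : R -> nat -> R := fun _ => x.

Definition is_pos_eq (n : nat) (M : dmas) (x : nat -> R) : Prop :=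
  (forall j, (j < n)%nat -> 0 < x j) /\
  forall j, (j < n)%nat ->
    fsum (nr M) (fun i => kap M i * mono n x (ysrc M i) * (yprod M i j - ysrc M i j)) = 0.

Definition c_a (n : nat) (M : dmas) (a : nat -> R) (psi : R -> nat -> R) : R :=
  dot n a (fun j => psi 0 j + fsum (nr M) (fun i =>
     kap M i * RInt (fun s => mono n (psi s) (ysrc M i)) (- dly M i) 0 * ysrc M i j)).

Definition Pclass (n : nat) (M : dmas) (tau : R) (theta psi : R -> nat -> R) : Prop :=
  Cnn n tau psi /\ forall a, in_Sperp n M a -> c_a n M a psi = c_a n M a theta.

Definition veq_dec (n : nat) (u v : nat -> R) : bool :=
  if excluded_middle_informative (veq n u v) then true else false.

Definition is_complex (n : nat) (M : dmas) (eta : nat -> R) : Prop :=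
  (exists i, (i < nr M)%nat /\ veq n eta (ysrc M i)) \/
  (exists i, (i < nr M)%nat /\ veq n eta (yprod M i)).

Definition complex_balanced (n : nat) (M : dmas) (x : nat -> R) : Prop :=
  (forall j, (j < n)%nat -> 0 < x j) /\
  forall eta, is_complex n M eta ->
    fsum (nr M) (fun i => if veq_dec n eta (ysrc M i) then kap M i * mono n x (ysrc M i) else 0)
    = fsum (nr M) (fun i => if veq_dec n eta (yprod M i) then kap M i * mono n x (ysrc M i) else 0).

Definition DCB (n : nat) (M : dmas) : Prop :=
  wf_dmas n M /\ exists x, complex_balanced n M x.

(* Q = diag(q), acting on vectors and functions *)
Definition Qv (q x : nat -> R) : nat -> R := fun j => q j * x j.
Definition Qf (q : nat -> R) (psi : R -> nat -> R) : R -> nat -> R := fun s => Qv q (psi s).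
Definition Qinvf (q : nat -> R) (psi : R -> nat -> R) : R -> nat -> R :=
  fun s j => psi s j / q j.

Definition lin_conj (n : nat) (tau : R) (M Mt : dmas) (q : nat -> R) : Prop :=
  (forall j, (j < n)%nat -> 0 < q j) /\
  forall psi, Cpos n tau psi -> forall j, (j < n)%nat ->
    Frhs n M (Qf q psi) j = q j * Frhs n Mt psi j.

Definition h_a (n : nat) (Mt : dmas) (q : nat -> R) (a : nat -> R) (psi : R -> nat -> R) : R :=
  dot n a (fun j => psi 0 j + fsum (nr Mt) (fun i =>
     kap Mt i * fprod n (fun k => rpow (q k) (- ysrc Mt i k))
     * RInt (fun s => mono n (psi s) (ysrc Mt i)) (- dly Mt i) 0
     * (q j * ysrc Mt i j))).

(* H_theta: a ranges over (Q^{-1})^T S~^perp = { Q^{-1} b | b in S~^perp } *)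
Definition Hclass (n : nat) (Mt : dmas) (tau : R) (q : nat -> R) (theta psi : R -> nat -> R) : Prop :=
  Cnn n tau psi /\
  forall a, (exists b, in_Sperp n Mt b /\ forall j, (j < n)%nat -> a j = b j / q j) ->
    h_a n Mt q a psi = h_a n Mt q a theta.

From Stdlib Require Import Reals Lra Lia.
From Coquelicot Require Import Coquelicot.
Open Scope R_scope.

(* Proof: the monomial of Q^{-1} psi is the monomial of psi times the constant
   prod_k q_k^{-y_k}, so for a = Q^{-T} b the functional h_a(psi) of D~M equals
   c_b(Q^{-1} psi); hence H_theta is exactly Q applied to the compatibility class
   of Q^{-1} theta.  Applying the conjugacy F(Q psi) = Q F~(psi) to constant
   functions shows that x |-> Q x is a bijection from the positive equilibria of
   D~M onto those of DM, so existence and uniqueness in that class transfer. *)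

Definition Qinvv (q x : nat -> R) : nat -> R := fun j => x j / q j.

Lemma fsum_ext n f g : (forall i, (i < n)%nat -> f i = g i) -> fsum n f = fsum n g.
Proof.
  induction n as [|n IH]; simpl; intros H; auto.
  rewrite IH by (intros; apply H; lia). rewrite H by lia. reflexivity.
Qed.

Lemma fprod_ext n f g : (forall i, (i < n)%nat -> f i = g i) -> fprod n f = fprod n g.
Proof.
  induction n as [|n IH]; simpl; intros H; auto.
  rewrite IH by (intros; apply H; lia). rewrite H by lia. reflexivity.
Qed.

Lemma fsum_scal_l n c f : c * fsum n f = fsum n (fun i => c * f i).
Proof. induction n as [|n IH]; simpl; [ring | rewrite <- IH; ring]. Qed.

Lemma mono_ext n x x' y : veq n x x' -> mono n x y = mono n x' y.
Proof. intros H; apply fprod_ext; intros j Hj; rewrite H; auto. Qed.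

Lemma rpow_div x q a : 0 <= x -> 0 < q -> rpow (x / q) a = rpow q (- a) * rpow x a.
Proof.
  intros Hx Hq. unfold rpow.
  destruct (Req_EM_T q 0); [lra|].
  destruct (Req_EM_T x 0) as [->|Hx0].
  - rewrite Rdiv_0_l. destruct (Req_EM_T 0 0); [|lra].
    destruct (Req_EM_T a 0) as [->|]; [rewrite Ropp_0, Rpower_O; lra | ring].
  - destruct (Req_EM_T (x / q) 0) as [Hxq|].
    + exfalso. apply Hx0. replace x with (x / q * q) by (field; lra). rewrite Hxq; ring.
    + unfold Rpower. rewrite <- exp_plus, ln_div by lra. f_equal; ring.
Qed.

Lemma mono_Qinvv n x q y :
  (forall j, (j < n)%nat -> 0 <= x j) -> (forall j, (j < n)%nat -> 0 < q j) ->
  mono n (Qinvv q x) y = fprod n (fun k => rpow (q k) (- y k)) * mono n x y.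
Proof.
  unfold mono, Qinvv. induction n as [|n IH]; simpl; intros Hx Hq; [ring|].
  rewrite IH, rpow_div by (intros; (apply Hx || apply Hq); lia). ring.
Qed.

Definition clamp (tau s : R) : R := Rmax (- tau) (Rmin s 0).

Lemma clamp_in_I tau s : 0 <= tau -> in_I tau (clamp tau s).
Proof. intros; unfold clamp, in_I, Rmax, Rmin; repeat destruct Rle_dec; lra. Qed.

Lemma clamp_id tau s : in_I tau s -> clamp tau s = s.
Proof. unfold in_I, clamp, Rmax, Rmin; intros; repeat destruct Rle_dec; lra. Qed.

Lemma clamp_lipschitz tau s s' :
  0 <= tau -> Rabs (clamp tau s' - clamp tau s) <= Rabs (s' - s).
Proof.
  intros; unfold clamp, Rmax, Rmin; repeat destruct Rle_dec;
  unfold Rabs; repeat destruct Rcase_abs; lra.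
Qed.

Lemma continuity_pt_clamp n tau psi j s : 0 <= tau -> cont_on n tau psi -> (j < n)%nat ->
  continuity_pt (fun s => psi (clamp tau s) j) s.
Proof.
  intros Htau Hc Hj eps Heps.
  destruct (Hc j Hj (clamp tau s) (clamp_in_I tau s Htau) eps Heps) as [d [Hd H]].
  exists d; split; auto. intros s' [_ Hs']. simpl in *. unfold R_dist in *.
  apply H; [apply clamp_in_I; auto|].
  eapply Rle_lt_trans; [apply clamp_lipschitz|]; auto.
Qed.

Lemma continuity_pt_fprod n (g : R -> nat -> R) x :
  (forall j, (j < n)%nat -> continuity_pt (fun s => g s j) x) ->
  continuity_pt (fun s => fprod n (g s)) x.
Proof.
  induction n as [|n IH]; simpl; intros H.
  - apply continuity_pt_const; intros ? ?; auto.
  - apply (continuity_pt_mult (fun s => fprod n (g s)) (fun s => g s n));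
      [apply IH; intros|]; apply H; lia.
Qed.

Lemma continuity_pt_rpow (f : R -> R) a x : (forall s, 0 < f s) -> continuity_pt f x ->
  continuity_pt (fun s => rpow (f s) a) x.
Proof.
  intros Hpos Hc.
  apply continuity_pt_ext with (f := fun s => exp (a * ln (f s))).
  { intros s. unfold rpow. destruct Req_EM_T; [specialize (Hpos s); lra | reflexivity]. }
  apply (continuity_pt_comp (fun s => a * ln (f s)) exp);
    [|apply derivable_continuous_pt, derivable_pt_exp].
  apply (continuity_pt_mult (fun _ => a) (fun s => ln (f s)));
    [apply continuity_pt_const; intros ? ?; auto|].
  apply (continuity_pt_comp f ln); auto.
  apply derivable_continuous_pt. exists (/ f x). apply derivable_pt_lim_ln; auto.
Qed.

(* Continuity is only known on [-tau, 0], so the integrand is first extended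
   continuously to all of R by clamping its argument. *)
Lemma ex_RInt_mono n tau psi y d : Cpos n tau psi -> 0 <= d <= tau ->
  ex_RInt (fun s => mono n (psi s) y) (- d) 0.
Proof.
  intros [Hc Hpos] Hd.
  apply ex_RInt_ext with (f := fun s => mono n (psi (clamp tau s)) y).
  { intros s. rewrite Rmin_left, Rmax_right by lra. intros Hs.
    rewrite clamp_id; [|unfold in_I]; lra. }
  apply (@ex_RInt_continuous R_CompleteNormedModule). intros z _.
  apply (proj1 (continuity_pt_filterlim _ _)).
  apply (continuity_pt_fprod n (fun s j => rpow (psi (clamp tau s) j) (y j))).
  intros j Hj. apply (continuity_pt_rpow (fun s => psi (clamp tau s) j)).
  - intros s; apply (Hpos _ (clamp_in_I tau s ltac:(lra)) j Hj).
  - apply (continuity_pt_clamp n); auto; lra.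
Qed.

Lemma Cpos_Cnn n tau psi : Cpos n tau psi -> Cnn n tau psi.
Proof. intros [Hc Hpos]; split; auto. intros; apply Rlt_le; auto. Qed.

Lemma Cpos_constf n tau x : (forall j, (j < n)%nat -> 0 < x j) -> Cpos n tau (constf x).
Proof.
  intros H; split; [|intros; apply H; auto].
  intros j Hj s _ eps Heps. exists 1; split; [lra|]. intros. unfold constf.
  rewrite Rminus_diag, Rabs_R0; auto.
Qed.

Lemma Cnn_ext n tau psi phi :
  (forall s, veq n (psi s) (phi s)) -> Cnn n tau psi -> Cnn n tau phi.
Proof.
  intros E [Hc Hnn]; split.
  - intros j Hj s Hs eps Heps. destruct (Hc j Hj s Hs eps Heps) as [d [Hd H]].
    exists d; split; auto. intros s' Hs' Hss'. rewrite <- !E by auto. auto.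
  - intros s Hs j Hj. rewrite <- E by auto. auto.
Qed.

Lemma Cpos_Qinvf n tau q psi : (forall j, (j < n)%nat -> 0 < q j) ->
  Cpos n tau psi -> Cpos n tau (Qinvf q psi).
Proof.
  intros Hq [Hc Hpos]; split.
  - intros j Hj s Hs eps Heps. specialize (Hq j Hj).
    destruct (Hc j Hj s Hs (eps * q j)) as [d [Hd H]]; [nra|].
    exists d; split; auto. intros s' Hs' Hss'. unfold Qinvf.
    replace (psi s' j / q j - psi s j / q j) with ((psi s' j - psi s j) / q j)
      by (field; lra).
    unfold Rdiv. rewrite Rabs_mult, Rabs_inv, (Rabs_right (q j)) by lra.
    apply (Rmult_lt_reg_r (q j)); auto.
    rewrite Rmult_assoc, Rinv_l, Rmult_1_r by lra. auto.
  - intros s Hs j Hj. apply Rdiv_lt_0_compat; auto.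
Qed.

Lemma Qv_Qinvv n q x : (forall j, (j < n)%nat -> 0 < q j) -> veq n (Qv q (Qinvv q x)) x.
Proof. intros Hq j Hj. unfold Qv, Qinvv. specialize (Hq j Hj). field. lra. Qed.

Lemma Qinvv_Qv n q x : (forall j, (j < n)%nat -> 0 < q j) -> veq n (Qinvv q (Qv q x)) x.
Proof. intros Hq j Hj. unfold Qv, Qinvv. specialize (Hq j Hj). field. lra. Qed.

Lemma c_a_ext n M a psi phi :
  (forall s, veq n (psi s) (phi s)) -> c_a n M a psi = c_a n M a phi.
Proof.
  intros E. unfold c_a, dot. apply fsum_ext; intros j Hj. rewrite (E 0 j Hj).
  do 2 f_equal. apply fsum_ext; intros i Hi. do 2 f_equal.
  apply RInt_ext; intros. apply mono_ext; auto.
Qed.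

Lemma Pclass_ext n M tau theta psi phi :
  (forall s, veq n (psi s) (phi s)) -> Pclass n M tau theta psi -> Pclass n M tau theta phi.
Proof.
  intros E [HC Hc]; split; [exact (Cnn_ext n tau psi phi E HC)|].
  intros a Ha. rewrite <- (c_a_ext n M a psi phi E). auto.
Qed.

Section Conjugate.

Variables (n : nat) (tau : R) (Mt : dmas) (q : nat -> R).
Hypothesis wf_Mt : wf_dmas n Mt.
Hypothesis delay_Mt : delay_bound Mt tau.
Hypothesis q_pos : forall j, (j < n)%nat -> 0 < q j.

Lemma h_a_Qinvf a b psi : (forall j, (j < n)%nat -> a j = b j / q j) -> Cpos n tau psi ->
  h_a n Mt q a psi = c_a n Mt b (Qinvf q psi).
Proof.
  intros Hab Hpsi. unfold h_a, c_a, dot. apply fsum_ext; intros j Hj.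
  assert (Hsum : fsum (nr Mt) (fun i => kap Mt i * fprod n (fun k => rpow (q k) (- ysrc Mt i k))
      * RInt (fun s => mono n (psi s) (ysrc Mt i)) (- dly Mt i) 0 * (q j * ysrc Mt i j))
    = q j * fsum (nr Mt) (fun i => kap Mt i *
        RInt (fun s => mono n (Qinvf q psi s) (ysrc Mt i)) (- dly Mt i) 0 * ysrc Mt i j)).
  { rewrite fsum_scal_l. apply fsum_ext; intros i Hi.
    destruct (wf_Mt i Hi) as [_ [Hdly _]]. specialize (delay_Mt i Hi).
    rewrite (RInt_ext (fun s => mono n (Qinvf q psi s) (ysrc Mt i))
                     (fun s => scal (fprod n (fun k => rpow (q k) (- ysrc Mt i k)))
                                       (mono n (psi s) (ysrc Mt i)))).
    - rewrite (@RInt_scal R_CompleteNormedModule) by (apply (ex_RInt_mono n tau); auto; lra).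
      change (scal ?u ?v) with (u * v). ring.
    - rewrite Rmin_left, Rmax_right by lra. intros s Hs. apply mono_Qinvv; auto.
      intros k Hk. apply Rlt_le, (proj2 Hpsi); auto. unfold in_I; lra. }
  rewrite Hsum, Hab by auto. unfold Qinvf. specialize (q_pos j Hj). field. lra.
Qed.

Lemma Hclass_Pclass_Qinvf theta psi : Cpos n tau theta -> Cpos n tau psi ->
  Hclass n Mt tau q theta psi <-> Pclass n Mt tau (Qinvf q theta) (Qinvf q psi).
Proof.
  intros Htheta Hpsi.
  assert (Hh : forall a b psi', Cpos n tau psi' -> (forall j, (j < n)%nat -> a j = b j / q j) ->
            h_a n Mt q a psi' = c_a n Mt b (Qinvf q psi'))
    by (intros; apply h_a_Qinvf; auto).
  split; intros [_ Hcl]; split.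
  - apply Cpos_Cnn, Cpos_Qinvf; auto.
  - intros b Hb. rewrite <- !(Hh (Qinvv q b) b) by auto.
    apply Hcl. exists b; auto.
  - apply Cpos_Cnn; auto.
  - intros a [b [Hb Hab]]. rewrite !(Hh a b) by auto. auto.
Qed.

Lemma Frhs_constf M x j : Frhs n M (constf x) j =
  fsum (nr M) (fun i => kap M i * mono n x (ysrc M i) * (yprod M i j - ysrc M i j)).
Proof. apply fsum_ext; intros; unfold constf; ring. Qed.

Lemma is_pos_eq_ext M x y : veq n x y -> is_pos_eq n M x -> is_pos_eq n M y.
Proof.
  intros E [Hpos Heq]; split; intros j Hj; [rewrite <- E; auto|].
  rewrite <- (Heq j Hj). apply fsum_ext; intros i Hi. rewrite (mono_ext n y x); auto.
  intros k Hk; symmetry; auto.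
Qed.

Lemma is_pos_eq_Qv M x : lin_conj n tau M Mt q ->
  is_pos_eq n Mt x <-> is_pos_eq n M (Qv q x).
Proof.
  intros [_ Hconj].
  assert (Hpos : (forall j, (j < n)%nat -> 0 < x j) <->
                 (forall j, (j < n)%nat -> 0 < Qv q x j)).
  { split; intros H j Hj; specialize (H j Hj); specialize (q_pos j Hj); unfold Qv in *;
      [nra | apply (Rmult_lt_reg_l (q j)); lra]. }
  assert (Hrhs : (forall j, (j < n)%nat -> 0 < x j) -> forall j, (j < n)%nat ->
      fsum (nr M) (fun i => kap M i * mono n (Qv q x) (ysrc M i) * (yprod M i j - ysrc M i j))
      = q j * fsum (nr Mt) (fun i => kap Mt i * mono n x (ysrc Mt i) * (yprod Mt i j - ysrc Mt i j))).
  { intros Hx j Hj. rewrite <- !Frhs_constf. exact (Hconj _ (Cpos_constf n tau x Hx) j Hj). }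
  split; intros [Hx Heq]; split; try tauto; intros j Hj.
  - rewrite Hrhs, Heq by auto. ring.
  - assert (Hx' : forall j, (j < n)%nat -> 0 < x j) by tauto.
    specialize (Hrhs Hx' j Hj). rewrite Heq in Hrhs by auto. specialize (q_pos j Hj). nra.
Qed.

End Conjugate.

Theorem mainTheorem4 (n : nat) (tau : R) (M Mt : dmas) (q : nat -> R)
  (theta : R -> nat -> R)
  (hM : wf_dmas n M) (hMt : DCB n Mt)
  (htauM : delay_bound M tau) (htauMt : delay_bound Mt tau)
  (hconj : lin_conj n tau M Mt q)
  (* cited result: each compatibility class of a DCB system with positive
     initial function contains exactly one positive equilibrium *)
  (hDCBuniq : forall phi, Cpos n tau phi ->
     exists xt, is_pos_eq n Mt xt /\ Pclass n Mt tau phi (constf xt) /\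
       forall xt', is_pos_eq n Mt xt' -> Pclass n Mt tau phi (constf xt') -> veq n xt' xt)
  (htheta : Cpos n tau theta) :
  exists xt,
    is_pos_eq n Mt xt /\ Pclass n Mt tau (Qinvf q theta) (constf xt) /\
    (forall xt', is_pos_eq n Mt xt' -> Pclass n Mt tau (Qinvf q theta) (constf xt') ->
       veq n xt' xt) /\
    is_pos_eq n M (Qv q xt) /\ Hclass n Mt tau q theta (constf (Qv q xt)) /\
    (forall x, is_pos_eq n M x -> Hclass n Mt tau q theta (constf x) -> veq n x (Qv q xt)).
Proof.
  pose proof hconj as [q_pos _]. destruct hMt as [wf_Mt _].
  destruct (hDCBuniq _ (Cpos_Qinvf n tau q theta q_pos htheta)) as [xt [Hxt [HP Huniq]]].
  assert (HQxt : is_pos_eq n M (Qv q xt)) by (apply (is_pos_eq_Qv n tau Mt); auto).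
  assert (Hclass_iff : forall x, is_pos_eq n M x ->
            Hclass n Mt tau q theta (constf x) <-> Pclass n Mt tau (Qinvf q theta) (constf (Qinvv q x)))
    by (intros x Hx; apply Hclass_Pclass_Qinvf, Cpos_constf, Hx; auto).
  exists xt. do 4 (split; auto). split.
  - apply Hclass_iff, (Pclass_ext n Mt tau _ (constf xt)); auto.
    intros s j Hj; symmetry; apply (Qinvv_Qv n); auto.
  - intros x Hx HH.
    assert (Hx' : veq n (Qinvv q x) xt).
    { apply Huniq; [|apply Hclass_iff; auto].
      apply (is_pos_eq_Qv n tau Mt q q_pos M), (is_pos_eq_ext n M x); auto.
      intros j Hj; symmetry; apply (Qv_Qinvv n); auto. }
    intros j Hj. rewrite <- (Qv_Qinvv n q x q_pos j Hj). unfold Qv. rewrite Hx'; auto.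
Qed.
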